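(* Let $k,d\in\mathbb{N}$ and $m,n\in\{1,\dots,d\}$. Define $\Delta_{m,n}:\mathbb{R}^{d\times d}\to\mathbb{R}^{d\times d}$ by $[\Delta_{m,n}(X)]_{m',n'}=[X]_{m,n}$ if $(m',n')=(m,n)$ and $0$ otherwise. Then there exist $r\in\mathbb N$ with $r\leq \frac{5}{2}d-1$ and kernels $K^1,\dots,K^r\in\mathbb{R}^{(2k+1)\times(2k+1)}$ (depending on $m,n$) such that for all $X\in[0,1]^{d\times d}$, $$\Delta_{m,n}(X)=K^r*(\cdots*(K^2*(K^1*X))\cdots).$$
   Context: Single-channel zero-padding convolution: for $K\in\mathbb R^{(2k+1)\times(2k+1)}$ with entries $[K]_{s,t}$, $s,t\in\{-k,\dots,k\}$, and $X\in\mathbb R^{d\times d}$, $[K*X]_{m,n}=\sum_{s,t=-k}^k[K]_{s,t}[\iota(X)]_{m+s,n+t}$ for $m,n\in\{1,\dots,d\}$, where $[\iota(X)]_{a,b}=[X]_{a,b}$ if $a,b\in\{1,\dots,d\}$ and $0$ for other $a,b\in\mathbb Z$. *)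

From mathcomp Require Import all_boot all_order all_algebra.
From mathcomp Require Import reals.
Set Implicit Arguments. Unset Strict Implicit. Unset Printing Implicit Defensive.
Import Order.TTheory GRing.Theory Num.Theory.
Local Open Scope ring_scope.

(* Indices are 0-based: 'I_d = {0,...,d-1} stands for {1,...,d}.
   Kernel index s in 'I_(2k+1) stands for s - k in {-k,...,k}. *)

Definition pad (R : realType) (d : nat) (X : 'M[R]_d) (a b : int) : R :=
  if (0 <= a) && (0 <= b) then
    match (insub `|a|%N : option 'I_d), (insub `|b|%N : option 'I_d) with
    | Some i, Some j => X i j
    | _, _ => 0
    end
  else 0.

Definition conv (R : realType) (k d : nat) (K : 'M[R]_(k.*2.+1)) (X : 'M[R]_d)
  : 'M[R]_d :=
  \matrix_(i < d, j < d)
    \sum_(s < k.*2.+1) \sum_(t < k.*2.+1)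
      K s t * pad X (i%:Z + s%:Z - k%:Z) (j%:Z + t%:Z - k%:Z).

Definition conv_chain (R : realType) (k d : nat) (Ks : seq 'M[R]_(k.*2.+1))
  (X : 'M[R]_d) : 'M[R]_d :=
  foldl (fun Y K => conv K Y) X Ks.

Definition Delta (R : realType) (d : nat) (m n : 'I_d) (X : 'M[R]_d) : 'M[R]_d :=
  \matrix_(i < d, j < d) if (i == m) && (j == n) then X m n else 0.

From mathcomp Require Import all_boot all_order all_algebra.
From mathcomp Require Import reals.
From mathcomp Require Import zify.
From Stdlib Require Import FunctionalExtensionality.
Set Implicit Arguments. Unset Strict Implicit. Unset Printing Implicit Defensive.
Import Order.TTheory GRing.Theory Num.Theory.
Local Open Scope ring_scope.

(* A kernel whose only nonzero entry is a 1 at offset (u, v) maps the padded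
   image f to (a, b) |-> f (a + u, b + v), cut back to the d x d window.  For
   u, v = +-1 the two coordinates evolve independently, so it suffices to
   isolate one index m by truncated unit shifts: m shifts by +1 discard the
   indices below m and bring entry m to 0, d - 1 shifts by -1 discard all the
   others and move it to d - 1, and d - 1 - m shifts by +1 bring it back to m.
   Running this walk in both coordinates at once takes 2(d - 1) kernels. *)

Definition in_range (d : nat) (a : int) : bool := (0 <= a) && (a < d%:Z).

Section ShiftMask.
Variables (V : Type) (z : V) (d : nat).

Definition shift_mask (g : int -> V) (u : int) : int -> V :=
  fun a => if in_range d a then g (a + u) else z.

Definition supported (g : int -> V) : Prop :=
  forall a, ~~ in_range d a -> g a = z.

Lemma supported_shift_mask g u : supported (shift_mask g u).
Proof. by move=> a /negbTE a_out; rewrite /shift_mask a_out. Qed.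

Lemma supported_foldl_shift_mask g us :
  supported g -> supported (foldl shift_mask g us).
Proof.
by elim: us g => //= u us IH g _; apply/IH/supported_shift_mask.
Qed.

Lemma foldl_shift_mask_nseq g u j : u \in [:: 1; -1] -> supported g ->
  forall a, foldl shift_mask g (nseq j u) a =
            if in_range d a then g (a + j%:Z * u) else z.
Proof.
move=> u_unit + a; elim: j g => [|j IH] g g_supp /=.
  by rewrite mul0r addr0; case: ifP => // /negbT a_out; rewrite g_supp.
rewrite IH; last exact: supported_shift_mask.
rewrite /shift_mask.
case: ifP => // a_in; case: ifP => [_ | /negbT a_out].
  by congr g; move: u_unit; rewrite !inE => /orP[] /eqP->; lia.
rewrite g_supp //; move: a_in a_out; rewrite /in_range.
by move: u_unit; rewrite !inE => /orP[] /eqP->; lia.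
Qed.

Definition walk (m : nat) : seq int :=
  nseq m 1 ++ nseq d.-1 (-1) ++ nseq (d.-1 - m) 1.

Lemma size_walk m : (m < d)%N -> size (walk m) = (d.-1).*2.
Proof. by move=> m_lt; rewrite /walk !size_cat !size_nseq; lia. Qed.

Lemma walk_unit m : all (mem [:: 1; -1]) (walk m).
Proof. by rewrite /walk !all_cat !all_nseq !inE !eqxx ?orbT. Qed.

Lemma foldl_shift_mask_walk g m : (m < d)%N -> supported g ->
  forall a, foldl shift_mask g (walk m) a = if a == m%:Z then g a else z.
Proof.
move=> m_lt g_supp a; rewrite /walk !foldl_cat.
have unit1 : (1 : int) \in [:: 1; -1] by rewrite !inE eqxx.
have unitN1 : (-1 : int) \in [:: 1; -1] by rewrite !inE eqxx orbT.
rewrite foldl_shift_mask_nseq //; last first.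
  by do 2 apply: supported_foldl_shift_mask.
rewrite foldl_shift_mask_nseq //; last exact: supported_foldl_shift_mask.
rewrite foldl_shift_mask_nseq // /in_range.
case: eqP => [-> | a_ne_m].
  by rewrite !ifT; [congr g | ..]; lia.
by repeat case: ifP => ?; try lia.
Qed.

End ShiftMask.

Section ShiftMask2.
Variables (R : nmodType) (d : nat).
Implicit Types f : int -> int -> R.

Definition shift_rows : (int -> int -> R) -> int -> int -> int -> R :=
  shift_mask (fun _ => 0) d.

Definition shift_cols f (v : int) : int -> int -> R :=
  fun a => shift_mask 0 d (f a) v.

Definition shift2 f (uv : int * int) : int -> int -> R :=
  shift_rows (shift_cols f uv.2) uv.1.

Lemma shift_rows_colsC f u v :
  shift_rows (shift_cols f v) u = shift_cols (shift_rows f u) v.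
Proof.
apply: functional_extensionality => a; apply: functional_extensionality => b.
by rewrite /shift_rows /shift_cols /shift_mask; case: ifP; case: ifP.
Qed.

Lemma foldl_shift_cols f vs :
  foldl shift_cols f vs = fun a => foldl (shift_mask 0 d) (f a) vs.
Proof. by elim: vs f => //= v vs IH f; rewrite IH. Qed.

Lemma foldl_shift_cols_rows f u vs :
  foldl shift_cols (shift_rows f u) vs = shift_rows (foldl shift_cols f vs) u.
Proof. by elim: vs f => //= v vs IH f; rewrite -shift_rows_colsC IH. Qed.

Lemma foldl_shift2_zip f us vs : size us = size vs ->
  foldl shift2 f (zip us vs) = foldl shift_rows (foldl shift_cols f vs) us.
Proof.
elim: us vs f => [|u us IH] [|v vs] f //= [size_eq].
by rewrite IH // foldl_shift_cols_rows.
Qed.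

Lemma supported_shift_cols f v :
  supported (fun _ => 0) d f -> supported (fun _ => 0) d (shift_cols f v).
Proof.
move=> f_supp a a_out; apply: functional_extensionality => b.
by rewrite /shift_cols /shift_mask f_supp //; case: ifP.
Qed.

Lemma supported_foldl_shift_cols f vs :
  supported (fun _ => 0) d f -> supported (fun _ => 0) d (foldl shift_cols f vs).
Proof. by elim: vs f => //= v vs IH f /supported_shift_cols/IH. Qed.

End ShiftMask2.

Section Convolution.
Variables (R : realType) (k d : nat).
Implicit Type X : 'M[R]_d.

Lemma pad_ord X (i j : 'I_d) : pad X i j = X i j.
Proof. by rewrite /pad /= !valK. Qed.

Lemma pad_out X a b : ~~ (in_range d a && in_range d b) -> pad X a b = 0.
Proof.
rewrite /pad /in_range; case: a => [a|a]; case: b => [b|b] //=.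
rewrite !ltz_nat /= => not_in.
case: (ltnP a d) => a_lt; last by rewrite insubF // ltnNge a_lt.
rewrite insubT insubF //.
by move: not_in; rewrite a_lt /= ltnNge negbK => ->.
Qed.

Lemma in_range_ord a : in_range d a -> exists i : 'I_d, a = i%:Z.
Proof.
by case: a => [a|a] //=; rewrite /in_range ltz_nat => a_lt; exists (Ordinal a_lt).
Qed.

Lemma supported_pad_rows X : supported (fun _ => 0) d (pad X).
Proof.
move=> a /negbTE a_out; apply: functional_extensionality => b.
by rewrite pad_out // a_out.
Qed.

Lemma supported_pad_cols X a : supported 0 d (pad X a).
Proof. by move=> b /negbTE b_out; rewrite pad_out // b_out andbF. Qed.

Lemma pad_conv_delta X (s t : 'I_(k.*2.+1)) :
  pad (conv (delta_mx s t) X) = shift2 d (pad X) (s%:Z - k%:Z, t%:Z - k%:Z).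
Proof.
apply: functional_extensionality => a; apply: functional_extensionality => b.
rewrite /shift2 /shift_rows /shift_cols /shift_mask /=.
case a_in: (in_range d a); case b_in: (in_range d b);
  try by rewrite pad_out // a_in ?b_in.
have [[i ->] [j ->]] := (in_range_ord a_in, in_range_ord b_in).
rewrite pad_ord mxE (bigD1 s) //= (bigD1 t) //= mxE !eqxx mul1r !addrA.
rewrite big1 ?addr0 => [|t' /negbTE t'_ne]; last by rewrite mxE t'_ne andbF mul0r.
rewrite big1 ?addr0 // => s' /negbTE s'_ne.
by rewrite big1 // => t' _; rewrite mxE s'_ne mul0r.
Qed.

Hypothesis k_gt0 : (0 < k)%N.

Definition tap (u : int) : 'I_(k.*2.+1) := inord (absz (k%:Z + u)).

Lemma tapE u : u \in [:: 1; -1] -> (tap u)%:Z - k%:Z = u.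
Proof. by rewrite !inE => /orP[] /eqP->; rewrite inordK; lia. Qed.

Definition shift_kernel (u v : int) : 'M[R]_(k.*2.+1) := delta_mx (tap u) (tap v).

Lemma pad_conv_shift_kernel X u v : u \in [:: 1; -1] -> v \in [:: 1; -1] ->
  pad (conv (shift_kernel u v) X) = shift2 d (pad X) (u, v).
Proof. by move=> u_unit v_unit; rewrite pad_conv_delta !tapE. Qed.

Lemma pad_conv_chain_shift_kernel X us vs :
  all (mem [:: 1; -1]) us -> all (mem [:: 1; -1]) vs ->
  pad (conv_chain [seq shift_kernel uv.1 uv.2 | uv <- zip us vs] X) =
  foldl (shift2 d) (pad X) (zip us vs).
Proof.
elim: us vs X => [|u us IH] [|v vs] X //=.
move=> /andP[u_unit us_unit] /andP[v_unit vs_unit].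
by rewrite -pad_conv_shift_kernel //; exact: IH.
Qed.

End Convolution.

Theorem lemmaC1 (R : realType) (k d : nat) (hk : (1 <= k)%N)
  (m n : 'I_d) :
  exists Ks : seq 'M[R]_(k.*2.+1),
    (2 * size Ks <= 5 * d - 2)%N /\
    forall X : 'M[R]_d,
      (forall i j, 0 <= X i j <= 1) ->
      Delta m n X = conv_chain Ks X.
Proof.
have [m_lt n_lt] := (ltn_ord m, ltn_ord n).
exists [seq shift_kernel R k uv.1 uv.2 | uv <- zip (walk d m) (walk d n)].
rewrite size_map size_zip !size_walk // minnn; split; first lia.
move=> X _; apply/matrixP => i j.
rewrite -[RHS]pad_ord pad_conv_chain_shift_kernel ?walk_unit //.
rewrite foldl_shift2_zip ?size_walk // /shift_rows foldl_shift_mask_walk //;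
  last exact/supported_foldl_shift_cols/supported_pad_rows.
rewrite foldl_shift_cols mxE eqz_nat (inj_eq val_inj).
case: (i =P m) => [->|_] //=.
rewrite foldl_shift_mask_walk //; last exact: supported_pad_cols.
rewrite eqz_nat (inj_eq val_inj).
by case: (j =P n) => [->|]; rewrite ?pad_ord.
Qed.
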